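(* Let $\mathcal A$ be a unital $A_\infty$-category with unit transformation $\mathbf i^{\mathcal A}$ and let $f:\mathcal A\to\mathcal B$ be an $A_\infty$-functor. The following are equivalent: (C6) for all $X,Y\in\mathrm{Ob}\,\mathcal A$ the chain map $f_1:(s\mathcal A(X,Y),b_1)\to(s\mathcal B(Xf,Yf),b_1)$ is homotopic to $0$; (C7) for every $X\in\mathrm{Ob}\,\mathcal A$ the chain map $f_1:(s\mathcal A(X,X),b_1)\to(s\mathcal B(Xf,Xf),b_1)$ is homotopic to $0$; (C8) for every $X\in\mathrm{Ob}\,\mathcal A$ the induced map $H^\bullet(f_1):H^\bullet(s\mathcal A(X,X),b_1)\to H^\bullet(s\mathcal B(Xf,Xf),b_1)$ is zero; (C9) for every $X\in\mathrm{Ob}\,\mathcal A$ there is ${}_Xw\in(s\mathcal B)^{-2}(Xf,Xf)$ with ${}_X\mathbf i^{\mathcal A}_0f_1={}_Xw\,b_1$.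
   Context: Conventions: $\Bbbk$ commutative ring, $\otimes=\otimes_\Bbbk$ with Koszul signs, maps written on the right. $s$ denotes suspension and $T^ns\mathcal A(X,Y)=\bigoplus s\mathcal A(X,X_1)\otimes\cdots\otimes s\mathcal A(X_{n-1},Y)$. An $A_\infty$-category has degree 1 maps $b_n:T^ns\mathcal A\to s\mathcal A$ with $\sum(1^{\otimes r}\otimes b_n\otimes1^{\otimes t})b_{r+1+t}=0$; an $A_\infty$-functor $f$ has an object map and degree 0 components $f_n$ ($n\ge1$) with $\sum(f_{i_1}\otimes\cdots\otimes f_{i_l})b_l=\sum(1^{\otimes r}\otimes b_n\otimes1^{\otimes t})f_{r+1+t}$. Natural $A_\infty$-transformations, equivalence $\equiv$ and $(r\otimes p)B_2$ are as usual: a natural transformation $r:f\to g$ is a family $r_n:T^ns\mathcal A(X_0,X_n)\to s\mathcal B(X_0f,X_ng)$ ($n\ge0$) of degree $-1$ with $\sum(f_{i_\bullet}\otimes\cdots\otimes r_k\otimes g_{j_\bullet}\otimes\cdots)b_{q+1+t}+\sum(1^{\otimes q}\otimes b_m\otimes1^{\otimes t})r_{q+1+t}=0$; $(r\otimes p)B_2$ has components $\sum(f_{a_\bullet}\otimes\cdots\otimes r_j\otimes g_{c_\bullet}\otimes\cdots\otimes p_t\otimes h_{e_\bullet}\otimes\cdots)b_{\alpha+\beta+\gamma+2}$; $r\equiv p$ if $r-p=[v,b]$ for a degree $-2$ family $v$. A unit transformation of $\mathcal A$ is a natural $\mathbf i^{\mathcal A}:\mathrm{id}_{\mathcal A}\to\mathrm{id}_{\mathcal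 A}$ with $(\mathbf i^{\mathcal A}\otimes\mathbf i^{\mathcal A})B_2\equiv\mathbf i^{\mathcal A}$ such that the chain maps $(1\otimes{}_Y\mathbf i^{\mathcal A}_0)b_2$ and $({}_X\mathbf i^{\mathcal A}_0\otimes1)b_2$ of $(s\mathcal A(X,Y),b_1)$ are homotopy invertible for all $X,Y$, where ${}_X\mathbf i^{\mathcal A}_0\in(s\mathcal A)^{-1}(X,X)$ is the image of $1$; $\mathcal A$ is unital if it has one. *)

From HB Require Import structures.
From mathcomp Require Import all_boot all_order all_algebra.
Set Implicit Arguments. Unset Strict Implicit. Unset Printing Implicit Defensive.
Import Order.TTheory GRing.Theory Num.Theory.
Local Open Scope ring_scope.

Definition sgn (R : pzRingType) (k : int) : R := (-1) ^+ `|k|%N.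

Section Paths.
Variable R : comPzRingType.
Variable Ob : Type.
(* H X Y k = (s H(X,Y))^k, the degree-k part of the suspended hom-module *)
Variable H : Ob -> Ob -> int -> lmodType R.

(* A homogeneous elementary tensor x1 (x) ... (x) xn of
   T^n sH(X,Y) = (+) sH(X,X1) (x) ... (x) sH(X_{n-1},Y). *)
Inductive path : Ob -> Ob -> Type :=
| pnil (X : Ob) : path X X
| pcons (X Y Z : Ob) (k : int) (x : H X Y k) (p : path Y Z) : path X Z.

Fixpoint plen X Y (p : path X Y) : nat :=
  match p with pnil _ => 0%N | pcons _ _ _ _ _ p' => (plen p').+1 end.

Fixpoint pdeg X Y (p : path X Y) : int :=
  match p with pnil _ => 0 | pcons _ _ _ k _ p' => k + pdeg p' end.

Fixpoint pcat X Y Z (p : path X Y) : path Y Z -> path X Z :=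
  match p in path X' Y' return path Y' Z -> path X' Z with
  | pnil _ => fun q => q
  | pcons _ _ _ _ x p' => fun q => pcons x (pcat p' q)
  end.

Fixpoint splits2 X Z (p : path X Z) : seq {Y : Ob & (path X Y * path Y Z)%type} :=
  match p in path X Z return seq {Y : Ob & (path X Y * path Y Z)%type} with
  | pnil X => [:: existT _ X (pnil X, pnil X)]
  | pcons X Y Z k x p' =>
      existT _ X (pnil X, pcons x p') ::
      [seq existT (fun W => (path X W * path W Z)%type) (projT1 s)
             (pcons x (projT2 s).1, (projT2 s).2) | s <- splits2 p']
  end.

Definition splits3 X Z (p : path X Z) :
  seq {Y1 : Ob & {Y2 : Ob & (path X Y1 * path Y1 Y2 * path Y2 Z)%type}} :=
  flatten [seq [seq existT
                  (fun Y1 => {Y2 : Ob & (path X Y1 * path Y1 Y2 * path Y2 Z)%type})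
                  (projT1 s)
                  (existT (fun Y2 => (path X (projT1 s) * path (projT1 s) Y2 * path Y2 Z)%type)
                     (projT1 t) ((projT2 s).1, (projT2 t).1, (projT2 t).2))
               | t <- splits2 (projT2 s).2] | s <- splits2 p].

Definition sum3 (V : zmodType) X Z (p : path X Z)
  (G : forall Y1 Y2, path X Y1 -> path Y1 Y2 -> path Y2 Z -> V) : V :=
  \sum_(s <- splits3 p)
     G (projT1 s) (projT1 (projT2 s)) (projT2 (projT2 s)).1.1
       (projT2 (projT2 s)).1.2 (projT2 (projT2 s)).2.

(* decompositions of a tensor into consecutive nonempty blocks *)
Inductive bpath : Ob -> Ob -> Type :=
| bnil (X : Ob) : bpath X X
| bcons (X Y Z : Ob) (q : path X Y) (rest : bpath Y Z) : bpath X Z.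

Definition bmerge X Y Z k (x : H X Y k) (D : bpath Y Z) : seq (bpath X Z) :=
  match D in bpath Y' Z' return H X Y' k -> seq (bpath X Z') with
  | bnil _ => fun _ => [::]
  | bcons _ _ _ q rest => fun x => [:: bcons (pcons x q) rest]
  end x.

Fixpoint decomps X Z (p : path X Z) : seq (bpath X Z) :=
  match p in path X Z return seq (bpath X Z) with
  | pnil X => [:: bnil X]
  | pcons X Y Z k x p' =>
      flatten [seq bcons (pcons x (pnil Y)) D :: bmerge x D | D <- decomps p']
  end.

(* A family of maps T^n sH -> K, encoded by components: F p d is the
   degree-d component of the image of the homogeneous tensor p. *)
Definition graded (K : Ob -> Ob -> int -> lmodType R)
  (F : forall X Y, path X Y -> forall d, K X Y d) (s : int) : Prop :=
  forall X Y (p : path X Y) d, d != pdeg p + s -> F X Y p d = 0.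

Definition mlin (K : Ob -> Ob -> int -> lmodType R)
  (F : forall X Y, path X Y -> forall d, K X Y d) : Prop :=
  forall X Y Y' Z (p1 : path X Y) k (x y : H Y Y' k) (a : R) (p2 : path Y' Z) d,
    F X Z (pcat p1 (pcons (a *: x + y) p2)) d =
    a *: F X Z (pcat p1 (pcons x p2)) d + F X Z (pcat p1 (pcons y p2)) d.

Definition fam := forall X Y, path X Y -> forall d, H X Y d.

(* sum_{r+1+t=n} (1^r (x) b_m (x) 1^t) b_{r+1+t} = 0   (Koszul: b passes p3) *)
Definition ainf_eq (b : fam) : Prop :=
  forall X Z (p : path X Z) d,
    sum3 p (fun Y1 Y2 p1 p2 p3 =>
      if (0 < plen p2)%N then
        sgn R (pdeg p3) *: b _ _ (pcat p1 (pcons (b _ _ p2 (pdeg p2 + 1)) p3)) d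
      else 0) = 0.

(* natural A-infinity transformation r : id -> id (degree -1) *)
Definition nat_eq (b r : fam) : Prop :=
  forall X Z (p : path X Z) d,
    sum3 p (fun Y1 Y2 p1 p2 p3 =>
      sgn R (pdeg p3) *: b _ _ (pcat p1 (pcons (r _ _ p2 (pdeg p2 - 1)) p3)) d)
  + sum3 p (fun Y1 Y2 p1 p2 p3 =>
      if (0 < plen p2)%N then
        sgn R (pdeg p3) *: r _ _ (pcat p1 (pcons (b _ _ p2 (pdeg p2 + 1)) p3)) d
      else 0) = 0.

Definition is_nat_transf (b r : fam) : Prop :=
  graded r (-1) /\ mlin r /\ nat_eq b r.

(* (r (x) p) B_2 for r, p : id -> id *)
Definition B2 (b r q : fam) : fam :=
  fun X Z (p : path X Z) d =>
    sum3 p (fun Y1 Y2 p1 p2 pr =>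
      sum3 pr (fun Y3 Y4 p3 p4 p5 =>
        sgn R (pdeg p3 + pdeg p4) *:
          b _ _ (pcat p1 (pcons (r _ _ p2 (pdeg p2 - 1))
                 (pcat p3 (pcons (q _ _ p4 (pdeg p4 - 1)) p5)))) d)).

(* r == q  iff  r - q = [v, b] = v b - b v for a degree -2 family v *)
Definition teq (b r q : fam) : Prop :=
  exists v : fam, graded v (-2) /\ mlin v /\
    forall X Z (p : path X Z) d,
      r _ _ p d - q _ _ p d =
        sum3 p (fun Y1 Y2 p1 p2 p3 =>
          b _ _ (pcat p1 (pcons (v _ _ p2 (pdeg p2 - 2)) p3)) d)
      - sum3 p (fun Y1 Y2 p1 p2 p3 =>
          if (0 < plen p2)%N then
            sgn R (pdeg p3) *: v _ _ (pcat p1 (pcons (b _ _ p2 (pdeg p2 + 1)) p3)) d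
          else 0).

End Paths.

Arguments pnil {R Ob H} X.

Section Graded.
Variable R : comPzRingType.
(* maps between graded modules, by components *)
Definition gmap (M N : int -> lmodType R) := forall k, M k -> forall d, N d.

Definition ggraded M N (phi : gmap M N) (s : int) : Prop :=
  forall k x d, d != k + s -> phi k x d = 0.

Definition glin M N (phi : gmap M N) : Prop :=
  forall k (a : R) x y d, phi k (a *: x + y) d = a *: phi k x d + phi k y d.

(* composition phi then psi (maps on the right), phi of degree s *)
Definition gcomp M N P (phi : gmap M N) (s : int) (psi : gmap N P) : gmap M P :=
  fun k x d => psi (k + s) (phi k x (k + s)) d.

Definition gid (M : int -> lmodType R) : gmap M M :=
  fun k x d => match k =P d with
               | ReflectT e => eq_rect k (fun z => M z) x d e
               | ReflectF _ => 0 end.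
Arguments gid M k x d : clear implicits.

Definition ghtp M N (dM : gmap M M) (dN : gmap N N) (phi psi : gmap M N) : Prop :=
  exists h : gmap M N, ggraded h (-1) /\ glin h /\
    forall k x d, phi k x d - psi k x d =
                  dN (k - 1) (h k x (k - 1)) d + h (k + 1) (dM k x (k + 1)) d.

Definition gchain M N (dM : gmap M M) (dN : gmap N N) (phi : gmap M N) : Prop :=
  forall k x d, dN k (phi k x k) d = phi (k + 1) (dM k x (k + 1)) d.

Definition hinv M (dM : gmap M M) (phi : gmap M M) : Prop :=
  exists psi : gmap M M, ggraded psi 0 /\ glin psi /\ gchain dM dM psi /\
    ghtp dM dM (gcomp phi 0 psi) (gid M) /\ ghtp dM dM (gcomp psi 0 phi) (gid M).
End Graded.

Record AinfCat (R : comPzRingType) := {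
  aob : Type;
  ahom : aob -> aob -> int -> lmodType R;   (* s A(X,Y)^k *)
  ab : forall X Y, path ahom X Y -> forall d, ahom X Y d;
       (* b_n, n >= 1 (the value on pnil is never used) *)
  ab_deg : graded ab 1;
  ab_lin : mlin ab;
  ab_eq : ainf_eq ab }.
Arguments ahom {R} a _ _ _.
Arguments ab {R} a {X Y} _ _.

Record AinfFun (R : comPzRingType) (A B : AinfCat R) := {
  fob : aob A -> aob B;
  fmap : forall X Y, path (ahom A) X Y -> forall d, ahom B (fob X) (fob Y) d;
  f_deg : graded (K := fun X Y d => ahom B (fob X) (fob Y) d) fmap 0;
  f_lin : mlin (K := fun X Y d => ahom B (fob X) (fob Y) d) fmap;
  (* sum (f_{i1} (x) ... (x) f_{il}) b_l = sum (1^r (x) b_n (x) 1^t) f_{r+1+t} *)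
  f_eq : forall X Z (p : path (ahom A) X Z) d, (0 < plen p)%N ->
    \sum_(D <- decomps p)
       ab B (let fix app X' Z' (D : bpath (ahom A) X' Z')
                   : path (ahom B) (fob X') (fob Z') :=
               match D with
               | bnil X1 => pnil (fob X1)
               | bcons _ _ _ q rest => pcons (fmap q (pdeg q)) (app _ _ rest)
               end in app _ _ D) d
    = sum3 p (fun Y1 Y2 p1 p2 p3 =>
        if (0 < plen p2)%N then
          sgn R (pdeg p3) *: fmap (pcat p1 (pcons (ab A p2 (pdeg p2 + 1)) p3)) d
        else 0) }.

Definition b1 R (A : AinfCat R) (X Y : aob A) : gmap (ahom A X Y) (ahom A X Y) :=
  fun k x d => ab A (pcons x (pnil Y)) d.
Arguments b1 {R} A X Y k x d.

Definition f1 R (A B : AinfCat R) (f : AinfFun A B) (X Y : aob A)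
  : gmap (ahom A X Y) (ahom B (fob f X) (fob f Y)) :=
  fun k x d => fmap f (pcons x (pnil Y)) d.
Arguments f1 {R A B} f X Y k x d.

Definition unit0 R (A : AinfCat R) (i : fam (ahom A)) (X : aob A) : ahom A X X (-1) :=
  i X X (pnil X) (-1).

Definition is_unit_transf R (A : AinfCat R) (i : fam (ahom A)) : Prop :=
  is_nat_transf (@ab _ A) i /\
  teq (@ab _ A) (B2 (@ab _ A) i i) i /\
  forall X Y : aob A,
    hinv (b1 A X Y) (fun k x d => ab A (pcons x (pcons (unit0 i Y) (pnil Y))) d) /\
    hinv (b1 A X Y) (fun k x d => sgn R k *: ab A (pcons (unit0 i X) (pcons x (pnil Y))) d).

From Pilot Require Import Defs.
From HB Require Import structures.
From mathcomp Require Import all_boot all_order all_algebra.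
Import Order.TTheory GRing.Theory Num.Theory.
Local Open Scope ring_scope.
Set Implicit Arguments. Unset Strict Implicit.

(* Only (C9) => (C6) has content.  Write rho = (1 (x) i_0) b_2 for right
   multiplication by the unit; by unitality it has a homotopy inverse psi,
   with psi rho - 1 = h b_1 + b_1 h.  The A-infinity equations of f on
   (y, i_0) and of B on (y f_1, w), together with i_0 b_1 = 0 and
   i_0 f_1 = w b_1, make rho f_1 null-homotopic via
   K = (1 (x) i_0) f_2 - (f_1 (x) w) b_2.  Then f_1 ~ psi rho f_1 ~ 0, an
   explicit null-homotopy being psi K - h f_1. *)

Section LinearFun.
Variables (R : pzRingType) (U V W : lmodType R).

Lemma linear_funB (g : U -> V) : linear g -> forall x y, g (x - y) = g x - g y.
Proof. by move=> lin_g; exact: (zmod_morphism_linear lin_g). Qed.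

Lemma linear_fun0 (g : U -> V) : linear g -> g 0 = 0.
Proof. by move=> lin_g; rewrite -(subrr (0 : U)) linear_funB // subrr. Qed.

Lemma linear_funD (g : U -> V) : linear g -> forall x y, g (x + y) = g x + g y.
Proof. by move=> lin_g; exact: (GRing.semilinear_linear lin_g).2. Qed.

Lemma linear_subr (g1 g2 : U -> V) :
  linear g1 -> linear g2 -> linear (fun x => g1 x - g2 x).
Proof. by move=> lin1 lin2 a x y; rewrite lin1 lin2 scalerBr opprD addrACA. Qed.

Lemma linear_comp (g1 : U -> V) (g2 : V -> W) :
  linear g1 -> linear g2 -> linear (fun x => g2 (g1 x)).
Proof. by move=> lin1 lin2 a x y; rewrite lin1 lin2. Qed.

End LinearFun.

Section Signs.
Variable R : pzRingType.

Lemma sgn0 : sgn R 0 = 1. Proof. by rewrite /sgn expr0. Qed.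
Lemma sgnN1 : sgn R (-1) = -1. Proof. by rewrite /sgn expr1. Qed.
Lemma sgnN2 : sgn R (-2) = 1. Proof. by rewrite /sgn expr2 mulrNN mulr1. Qed.

End Signs.

Section Multilinear.
Variables (R : comPzRingType) (Ob : Type) (H K : Ob -> Ob -> int -> lmodType R).
Variable F : forall X Y, Defs.path H X Y -> forall d, K X Y d.
Hypothesis lin_F : mlin F.

Lemma mlin_head X Y Z k (p : Defs.path H Y Z) d :
  linear (fun x : H X Y k => F (pcons x p) d).
Proof. by move=> a x y; exact: (lin_F (pnil X)). Qed.

Lemma mlin_second X Y Y' Z k (x0 : H X Y k) m (p : Defs.path H Y' Z) d :
  linear (fun x : H Y Y' m => F (pcons x0 (pcons x p)) d).
Proof. by move=> a x y; exact: (lin_F (pcons x0 (pnil Y))). Qed.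

End Multilinear.

Ltac expand_short_sums :=
  rewrite /sum3 /splits3;
  cbn [decomps bmerge splits2 map flatten cat projT1 projT2 fst snd];
  rewrite !big_cons !big_nil;
  cbn [pcat plen pdeg projT1 projT2 fst snd];
  try change (0 < 0)%N with false; try change (0 < 1)%N with true;
  try change (0 < 2)%N with true; cbv beta iota;
  rewrite ?sgn0 ?scale1r ?addr0 ?add0r.

Section ShortTensors.
Variables (R : comPzRingType) (A B : AinfCat R).

Lemma b2_leibniz X Y Z k m (x : ahom A X Y k) (c : ahom A Y Z m) d :
  sgn R m *: ab A (pcons (b1 A X Y k x (k + 1)) (pcons c (pnil Z))) d
  + b1 A X Z (k + m + 1) (ab A (pcons x (pcons c (pnil Z))) (k + m + 1)) d
  + ab A (pcons x (pcons (b1 A Y Z m c (m + 1)) (pnil Z))) d = 0.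
Proof. by have := ab_eq (pcons x (pcons c (pnil Z))) d; expand_short_sums; rewrite !addrA. Qed.

Lemma nat_eq_cycle0 (r : fam (ahom A)) : nat_eq (@ab _ A) r ->
  forall X d, b1 A X X (-1) (r X X (pnil X) (-1)) d = 0.
Proof. by move=> nat_r X d; have := nat_r X X (pnil X) d; expand_short_sums. Qed.

Lemma b1_linear X Y k d : linear (fun x : ahom A X Y k => b1 A X Y k x d).
Proof. exact: (mlin_head (@ab_lin _ A)). Qed.

Variable f : AinfFun A B.

Lemma f1_chain X Y : gchain (b1 A X Y) (b1 B (fob f X) (fob f Y)) (f1 f X Y).
Proof. by move=> k x d; have := f_eq f (p := pcons x (pnil Y)) d isT; expand_short_sums. Qed.

Lemma f2_homotopy X Y Z k m (x : ahom A X Y k) (c : ahom A Y Z m) d :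
  ab B (pcons (f1 f X Y k x k) (pcons (f1 f Y Z m c m) (pnil (fob f Z)))) d
  + b1 B (fob f X) (fob f Z) (k + m) (fmap f (pcons x (pcons c (pnil Z))) (k + m)) d =
  sgn R m *: fmap f (pcons (b1 A X Y k x (k + 1)) (pcons c (pnil Z))) d
  + (f1 f X Z (k + m + 1) (ab A (pcons x (pcons c (pnil Z))) (k + m + 1)) d
     + fmap f (pcons x (pcons (b1 A Y Z m c (m + 1)) (pnil Z))) d).
Proof. by have := f_eq f (p := pcons x (pcons c (pnil Z))) d isT; expand_short_sums. Qed.

Lemma f1_graded X Y : ggraded (f1 f X Y) 0.
Proof. by move=> k x d d_ne; rewrite /f1 f_deg //= addr0. Qed.

Lemma f1_linear X Y k d : linear (fun x : ahom A X Y k => f1 f X Y k x d).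
Proof. exact: (mlin_head (f_lin f)). Qed.

End ShortTensors.

Lemma glin_linear (R : comPzRingType) (M N : int -> lmodType R) (phi : gmap M N) :
  glin phi -> forall k d, linear (fun x : M k => phi k x d).
Proof. by move=> lin_phi k d a x y; exact: lin_phi. Qed.

Lemma linear_glin (R : comPzRingType) (M N : int -> lmodType R) (phi : gmap M N) :
  (forall k d, linear (fun x : M k => phi k x d)) -> glin phi.
Proof. by move=> lin_phi k a x y d; exact: lin_phi. Qed.

Lemma ghtp0_cycle_boundary (R : comPzRingType) (M N : int -> lmodType R)
    (dM : gmap M M) (dN : gmap N N) (phi : gmap M N) :
  ghtp dM dN phi (fun _ _ _ => 0) ->
  forall k (x : M k), (forall d, dM k x d = 0) ->
  exists y : N (k - 1), forall d, dN (k - 1) y d = phi k x d.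
Proof.
move=> [h [_ [lin_h htp_h]]] k x cycle_x; exists (h k x (k - 1)) => d.
by rewrite -[RHS]subr0 htp_h cycle_x (linear_fun0 (glin_linear lin_h d)) addr0.
Qed.

Lemma gid_diag (R : comPzRingType) (M : int -> lmodType R) k (x : M k) :
  @gid R M k x k = x.
Proof. by rewrite /gid; case: eqP => // e; rewrite (eq_irrelevance e (erefl k)). Qed.

Section UnitBoundary.
Variables (R : comPzRingType) (A B : AinfCat R) (i : fam (ahom A)) (f : AinfFun A B).
Hypothesis unit_i : is_unit_transf i.

Lemma unit0_cycle X d : b1 A X X (-1) (unit0 i X) d = 0.
Proof. exact: (nat_eq_cycle0 unit_i.1.2.2). Qed.

Definition unit_mulr X Y : gmap (ahom A X Y) (ahom A X Y) :=
  fun k x d => ab A (pcons x (pcons (unit0 i Y) (pnil Y))) d.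
Arguments unit_mulr X Y k x d : clear implicits.

Variables (X Y : aob A) (w : ahom B (fob f Y) (fob f Y) (-2)).
Hypothesis unit0_f1_boundary :
  forall d, f1 f Y Y (-1) (unit0 i Y) d = b1 B (fob f Y) (fob f Y) (-2) w d.

Definition unit_mulr_f1_htp : gmap (ahom A X Y) (ahom B (fob f X) (fob f Y)) :=
  fun k y d => fmap f (pcons y (pcons (unit0 i Y) (pnil Y))) d
               - ab B (pcons (f1 f X Y k y k) (pcons w (pnil (fob f Y)))) d.
Arguments unit_mulr_f1_htp k y d : clear implicits.

Lemma f1_unit_mulr k (y : ahom A X Y k) d :
  f1 f X Y k (unit_mulr X Y k y k) d =
  b1 B (fob f X) (fob f Y) (k - 1) (unit_mulr_f1_htp k y (k - 1)) d
  + unit_mulr_f1_htp (k + 1) (b1 A X Y k y (k + 1)) d.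
Proof.
have f2_yi := f2_homotopy f y (unit0 i Y) d.
rewrite unit0_cycle (linear_fun0 (mlin_second (f_lin f) y (pnil Y) d)) addr0 in f2_yi.
rewrite sgnN1 scaleN1r subrK unit0_f1_boundary in f2_yi.
have leibniz := b2_leibniz (f1 f X Y k y k) w d.
rewrite f1_chain sgnN2 scale1r (_ : k + -2 + 1 = k - 1) in leibniz; last by rewrite -addrA.
change (-2 + 1 : int) with (-1 : int) in leibniz.
rewrite addrC in leibniz; move/eqP: leibniz; rewrite addr_eq0 => /eqP leibniz.
rewrite leibniz in f2_yi.
rewrite /unit_mulr_f1_htp (linear_funB (b1_linear (A := B) d)).
apply: (addrI (- fmap f (pcons (b1 A X Y k y (k + 1)) (pcons (unit0 i Y) (pnil Y))) d)).
by rewrite -f2_yi [RHS]addrCA addKr opprD addrC addrA addrAC.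
Qed.

Lemma unit_mulr_f1_htp_graded : ggraded unit_mulr_f1_htp (-1).
Proof.
by move=> k y d d_ne; rewrite /unit_mulr_f1_htp f_deg ?ab_deg ?subr0 //= addr0 -addrA.
Qed.

Lemma unit_mulr_f1_htp_lin : glin unit_mulr_f1_htp.
Proof.
apply: linear_glin => k d; apply: linear_subr; first exact: (mlin_head (f_lin f)).
exact: linear_comp (f1_linear f k) (mlin_head (@ab_lin _ B) _ d).
Qed.

Lemma f1_null_homotopic :
  ghtp (b1 A X Y) (b1 B (fob f X) (fob f Y)) (f1 f X Y) (fun _ _ _ => 0).
Proof.
have [[psi [_ [lin_psi [chain_psi [_ [h [_ [lin_h htp_h]]]]]]]] _] := unit_i.2.2 X Y.
exists (fun k x d => unit_mulr_f1_htp k (psi k x k) d - f1 f X Y (k - 1) (h k x (k - 1)) d).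
split; [|split].
- move=> k x d d_ne.
  by rewrite unit_mulr_f1_htp_graded // f1_graded ?subr0 // addr0.
- apply: linear_glin => k d; apply: linear_subr.
    exact: linear_comp (glin_linear lin_psi k) (glin_linear unit_mulr_f1_htp_lin d).
  exact: linear_comp (glin_linear lin_h (k - 1)) (f1_linear f d).
- move=> k x d.
  have htp_x := htp_h k x k.
  rewrite /gcomp addr0 gid_diag in htp_x.
  move/eqP: htp_x; rewrite subr_eq => /eqP htp_x.
  have f1_rho := f1_unit_mulr (psi k x k) d.
  rewrite /unit_mulr htp_x !(linear_funD (f1_linear f d)) in f1_rho.
  rewrite subr0 (linear_funB (b1_linear (A := B) d)) [k + 1 - 1]addrK.
  rewrite -(chain_psi k x (k + 1)) f1_chain [k - 1 + 1]subrK addrACA -f1_rho.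
  by rewrite -opprD addrAC subrr add0r.
Qed.

End UnitBoundary.

Unset Implicit Arguments. Set Strict Implicit.

Theorem proposition6p2 (R : comPzRingType) (A B : AinfCat R)
  (i : fam (ahom A)) (hi : is_unit_transf i) (f : AinfFun A B) :
  [<->
    (* (C6) *)
    (forall X Y : aob A,
       ghtp (b1 A X Y) (b1 B (fob f X) (fob f Y)) (f1 f X Y) (fun _ _ _ => 0));
    (* (C7) *)
    (forall X : aob A,
       ghtp (b1 A X X) (b1 B (fob f X) (fob f X)) (f1 f X X) (fun _ _ _ => 0));
    (* (C8) : H(f_1) = 0 on H(sA(X,X), b_1) *)
    (forall (X : aob A) (k : int) (x : ahom A X X k),
       (forall d, b1 A X X k x d = 0) ->
       exists y : ahom B (fob f X) (fob f X) (k - 1),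
         forall d, b1 B (fob f X) (fob f X) (k - 1) y d = f1 f X X k x d);
    (* (C9) *)
    (forall X : aob A,
       exists w : ahom B (fob f X) (fob f X) (-2),
         forall d, f1 f X X (-1) (unit0 i X) d = b1 B (fob f X) (fob f X) (-2) w d)].
Proof.
tfae=> [C6 X | C7 X | C8 X | C9 X Y].
- exact: C6.
- exact: ghtp0_cycle_boundary (C7 X).
- have [y y_bd] := C8 X (-1) (unit0 i X) (unit0_cycle hi X).
  by exists y => d; rewrite y_bd.
- have [w w_bd] := C9 Y.
  exact: (f1_null_homotopic hi X w_bd).
Qed.
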